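(* Let $C_{\vec B}$ be a Cantor set with CDF $F_{\vec B}$. For every irrational $x\in[0,1]$, $x\in C_{\vec B}$ if and only if $F_{\vec B}(x)$ is irrational.
   Context: A Cantor set is specified by a binary digit vector $\vec B=(b_0,\dots,b_{N-1})\in\{0,1\}^N$ with $N\ge3$ and $2\le\|\vec B\|:=\sum_i b_i\le N-1$; its digit set is $D=\{i:b_i=1\}$. With $\phi_d(x)=(x+d)/N$ for $d\in D$, $C_{\vec B}\subset[0,1]$ is the unique nonempty compact set with $C_{\vec B}=\bigcup_{d\in D}\phi_d(C_{\vec B})$, and $\mu_{\vec B}$ is the unique Borel probability measure with $\mu_{\vec B}=\frac{1}{\|\vec B\|}\sum_{d\in D}\mu_{\vec B}\circ\phi_d^{-1}$. The CDF is $F_{\vec B}(x)=\mu_{\vec B}([0,x])$, $x\in[0,1]$. *)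

From HB Require Import structures.
From mathcomp Require Import all_boot all_order all_algebra.
From mathcomp Require Import all_classical all_reals all_analysis.
Set Implicit Arguments. Unset Strict Implicit. Unset Printing Implicit Defensive.
Import Order.TTheory GRing.Theory Num.Theory numFieldNormedType.Exports.
Local Open Scope classical_set_scope.
Local Open Scope ring_scope.

Definition digit_norm (N : nat) (B : 'I_N -> bool) : nat := #|[pred i | B i]|.

Definition valid_digits (N : nat) (B : 'I_N -> bool) : Prop :=
  (3 <= N)%N /\ (2 <= digit_norm B)%N /\ (digit_norm B <= N.-1)%N.

Definition cantor_map (R : realType) (N : nat) (d : 'I_N) (x : R) : R :=
  (x + (d : nat)%:R) / N%:R.

(* C is a nonempty compact set with C = \bigcup_{d in D} phi_d(C)
   (the defining property of C_B; it has a unique solution). *)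
Definition is_cantor_set (R : realType) (N : nat) (B : 'I_N -> bool)
  (C : set R) : Prop :=
  [/\ C !=set0, compact C &
      C = \bigcup_(d in [set d : 'I_N | B d]) (cantor_map d @` C)].

(* mu is a Borel probability measure with
   mu = (1/||B||) sum_{d in D} mu o phi_d^{-1}
   (the defining property of mu_B; it has a unique solution). *)
Definition is_cantor_measure (R : realType) (N : nat) (B : 'I_N -> bool)
  (mu : probability R R) : Prop :=
  forall A : set R, measurable A ->
    (mu A = (((digit_norm B)%:R)^-1)%:E *
            \sum_(d < N | B d) mu (cantor_map d @^-1` A))%E.

Definition cantor_cdf (R : realType) (mu : probability R R) (x : R) : R :=
  fine (mu `[0, x]%classic).

From HB Require Import structures.
From mathcomp Require Import all_boot all_order all_algebra.
From mathcomp Require Import all_classical all_reals all_analysis.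
From mathcomp Require Import ring lra zify.
Set Implicit Arguments. Unset Strict Implicit. Unset Printing Implicit Defensive.
Import Order.TTheory GRing.Theory Num.Theory numFieldNormedType.Exports.
Local Open Scope classical_set_scope.
Local Open Scope ring_scope.

(* Write an irrational x in (0,1) in base N through the shift map
   T y = N y - floor (N y), whose first digit is a = floor (N x).  Then
   x lies in C exactly when every digit of x lies in D, and the half-line
   mass F(x) = mu (-oo, x] satisfies
     ||B|| F(x) = #{d in D | d < a} + [a in D] F(T x),
   because the self-similarity of mu forces F = 0 on (-oo, 0] and F = 1 on
   [1, +oo).  If some digit of x is not in D, unrolling this identity up to
   that digit shows that F(x) is rational.  If all digits are in D, F is
   strictly increasing on such points; were F(x) = p / s, every F(T^n x)
   would lie in the finite set {0, 1/s, ..., 1}, so T^i x = T^j x for some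
   i < j, and x, being eventually periodic under T, would be rational. *)

Section rational_closure.
Variable R : realType.

Lemma rational_nat n : rational (n%:R : R).
Proof. by exists n%:R => //; rewrite rmorph_nat. Qed.

Lemma rationalD (x y : R) : rational x -> rational y -> rational (x + y).
Proof. by move=> [p _ <-] [q _ <-]; exists (p + q); rewrite ?rmorphD. Qed.

Lemma rationalM (x y : R) : rational x -> rational y -> rational (x * y).
Proof. by move=> [p _ <-] [q _ <-]; exists (p * q); rewrite ?rmorphM. Qed.

Lemma rationalV (x : R) : rational x -> rational x^-1.
Proof. by move=> [p _ <-]; exists p^-1; rewrite ?fmorphV. Qed.

Lemma rational_affine (x : R) m n : rational x -> rational ((x + m%:R) / n%:R).
Proof.
move=> xQ; apply: rationalM (rationalV (rational_nat n)).
by apply: rationalD xQ _; exact: rational_nat.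
Qed.

Lemma rational_ratio m n : rational (m%:R / n%:R : R).
Proof. by rewrite -[m%:R]add0r; apply: rational_affine; exact: rational_nat 0. Qed.

Lemma rational_mul_int (x : R) : rational x ->
  exists2 s : nat, (0 < s)%N & exists a : int, x * s%:R = a%:~R.
Proof.
move=> [q _ <-]; exists `|denq q|%N; first by rewrite absz_gt0 denq_neq0.
exists (numq q); rewrite -{1}(divq_num_den q) fmorph_div /= !ratr_int.
by rewrite natr_absz gtr0_norm ?denq_gt0 // divfK // intr_eq0 denq_neq0.
Qed.

End rational_closure.

Section sum_const.
Variables (R : numDomainType) (I : finType) (P : pred I).

Lemma sum_ge_const_eq (f : I -> R) c : (forall i, P i -> c <= f i) ->
  \sum_(i | P i) f i = #|P|%:R * c -> forall i, P i -> f i = c.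
Proof.
move=> cf sumf i Pi; apply/eqP; rewrite -subr_eq0; apply/eqP.
apply: (psumr_eq0P (F := fun i => f i - c) _ _ Pi) => [j Pj|].
  by rewrite subr_ge0 cf.
by rewrite sumrB sumf sumr_const mulr_natl subrr.
Qed.

Lemma sum_le_const_eq (f : I -> R) c : (forall i, P i -> f i <= c) ->
  \sum_(i | P i) f i = #|P|%:R * c -> forall i, P i -> f i = c.
Proof.
move=> fc sumf i Pi; apply: oppr_inj; move: i Pi.
apply: (@sum_ge_const_eq (fun i => - f i)) => [j Pj|]; first by rewrite lerN2 fc.
by rewrite sumrN sumf mulrN.
Qed.

End sum_const.

Lemma bounded_nat_seq_repeats (h : nat -> nat) s :
  (forall n, h n <= s)%N -> exists i j, (i < j)%N /\ h i = h j.
Proof.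
move=> h_le; pose f (i : 'I_s.+2) : 'I_s.+1 := inord (h i).
have /injectivePn[i [j ij fij]] : ~~ injectiveb f.
  by apply/injectiveP => /leq_card; rewrite !card_ord ltnn.
have {}fij : h i = h j.
  by move/(congr1 val): fij; rewrite /= !inordK ?ltnS.
have [lt|gt|eq] := ltngtP i j; first by exists i, j.
  by exists j, i.
by move: ij; rewrite -val_eqE /= eq eqxx.
Qed.

Section shift_dynamics.
Variables (R : realType) (N : nat).
Hypothesis N_gt1 : (1 < N)%N.

Definition irrational_in01 (y : R) := irrational y /\ 0 < y < 1.
Definition digit (y : R) : nat := Num.trunc (N%:R * y).
Definition shift (y : R) : R := N%:R * y - (digit y)%:R.

Lemma irrational_in01_itv (x : R) : 0 <= x <= 1 -> irrational x -> irrational_in01 x.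
Proof.
move=> /andP[x_ge0 x_le1] xQ; split=> //; rewrite !lt_neqAle x_ge0 x_le1 !andbT.
apply/andP; split; apply/eqP => xE; apply: xQ.
  by rewrite -xE; exact: rational_nat 0.
by rewrite xE; exact: rational_nat 1.
Qed.

Lemma N_gt0 : 0 < N%:R :> R.
Proof. by rewrite ltr0n ltnW. Qed.

Lemma expN_mul_gt1 (e : R) : 0 < e -> exists n, 1 < (N ^ n)%:R * e.
Proof.
move=> e0; exists (Num.trunc e^-1).+1.
rewrite -ltr_pdivrMr // div1r; apply: lt_trans (truncnS_gt _) _.
by rewrite ltr_nat ltn_expl.
Qed.

Lemma expN_mul_le1 (e : R) : (forall n, (N ^ n)%:R * e <= 1) -> e <= 0.
Proof.
move=> e_le; rewrite leNgt; apply/negP => /expN_mul_gt1[n].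
by rewrite ltNge e_le.
Qed.

Lemma mul_digit_itv y : irrational_in01 y ->
  (digit y)%:R < N%:R * y < (digit y).+1%:R.
Proof.
move=> [yQ /andP[y0 _]].
have /andP[+ ->] := truncn_itv (mulr_ge0 (ler0n R N) (ltW y0)).
rewrite andbT le_eqVlt => /predU1P[dy|//]; case: yQ.
rewrite -[y](mulKf (lt0r_neq0 N_gt0)) -/(digit y) -dy mulrC.
exact: rational_ratio.
Qed.

Lemma digit_ltN y : irrational_in01 y -> (digit y < N)%N.
Proof.
move=> [_ /andP[y0 y1]]; rewrite /digit truncn_lt_nat ?mulr_ge0 ?ler0n ?ltW //.
by rewrite -{2}(mulr1 N%:R) ltr_pM2l // N_gt0.
Qed.

Lemma shift_in01 y : irrational_in01 y -> irrational_in01 (shift y).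
Proof.
move=> yI; have /andP[lo hi] := mul_digit_itv yI; case: yI => yQ _.
split; last by rewrite -natr1 in hi; rewrite /shift; apply/andP; split; lra.
move=> sQ; apply: yQ.
rewrite -[y](mulKf (lt0r_neq0 N_gt0)) mulrC -[N%:R * y](subrK (digit y)%:R).
exact: rational_affine sQ.
Qed.

Lemma iter_shift_in01 n y : irrational_in01 y -> irrational_in01 (iter n shift y).
Proof. by elim: n => [//|n IH] /IH /shift_in01. Qed.

Lemma iter_shiftE n y : exists m : nat, iter n shift y = (N ^ n)%:R * y - m%:R.
Proof.
elim: n => [|n [m IH]]; first by exists 0%N; rewrite /= mul1r subr0.
exists (N * m + digit (iter n shift y))%N.
by rewrite /= {1}/shift IH natrD !natrM expnSr natrM; ring.
Qed.

Lemma periodic_shift_rational k y : (0 < k)%N -> iter k shift y = y -> rational y.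
Proof.
move=> k_gt0 yk; have [m ykE] := iter_shiftE k y.
have Nk_gt1 : (1 < N ^ k)%N := leq_ltn_trans k_gt0 (ltn_expl k N_gt1).
have -> : y = m%:R / (N ^ k).-1%:R.
  have yE : y = (N ^ k)%:R * y - m%:R by rewrite -ykE yk.
  rewrite -subn1 natrB; last exact: ltnW.
  apply: (canRL (mulfK _)); first by rewrite subr_eq0 pnatr_eq1 gtn_eqF.
  by rewrite mulrBr mulr1 {2}yE; ring.
exact: rational_ratio.
Qed.

Lemma nonconstant_digits y : irrational_in01 y ->
  exists n, digit (iter n shift y) != digit y.
Proof.
move=> yI; apply: contrapT => /forallNP digitC.
have {}digitC n : digit (iter n shift y) = digit y by apply/eqP/negPn/negP; exact: digitC.
have c_lt : (digit y < N)%N := digit_ltN yI.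
pose p : R := (digit y)%:R / N.-1%:R.
have N1_gt0 : 0 < N.-1%:R :> R by rewrite ltr0n -ltnS prednK // ltnW.
have p01 : 0 <= p <= 1.
  by rewrite /p divr_ge0 //= ler_pdivrMr // mul1r ler_nat -ltnS prednK // ltnW.
have pE : N%:R * p - (digit y)%:R = p.
  rewrite -[N in N%:R * p]prednK ?(ltnW N_gt1) // -addn1 natrD mulrDl mul1r.
  by rewrite /p mulrC divfK ?gt_eqF // addrAC subrr add0r.
have iterE n : iter n shift y - p = (N ^ n)%:R * (y - p).
  elim: n => [|n IH]; first by rewrite mul1r.
  rewrite iterS {1}/shift digitC -{1}pE expnSr natrM mulrAC -IH; ring.
have : `|y - p| <= 0.
  apply: expN_mul_le1 => n; rewrite -normr_nat -normrM -iterE.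
  have [_ /andP[i0 i1]] := iter_shift_in01 n yI.
  by move: p01 => /andP[p0 p1]; rewrite ler_norml; apply/andP; split; lra.
rewrite normr_le0 subr_eq0 => /eqP yp; case: yI => + _; apply.
by rewrite yp; exact: rational_ratio.
Qed.

End shift_dynamics.

Section digit_set.
Variables (N : nat) (B : 'I_N -> bool).

Definition is_digit (n : nat) : bool := [exists a : 'I_N, (val a == n) && B a].
Definition digits_lt (n : nat) : nat := #|[pred a : 'I_N | B a && (val a < n)%N]|.

Lemma is_digitP n : reflect (exists2 a : 'I_N, val a = n & B a) (is_digit n).
Proof.
apply: (iffP existsP) => [[a /andP[/eqP <- Ba]]|[a <- Ba]]; exists a => //.
by rewrite eqxx.
Qed.

Lemma is_digitE (a : 'I_N) : is_digit a = B a.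
Proof. by apply/is_digitP/idP => [[b /val_inj -> //]|Ba]; exists a. Qed.

Lemma leq_digits_lt : {homo digits_lt : m n / (m <= n)%N}.
Proof.
move=> m n mn; apply: subset_leq_card; apply/fintype.subsetP => a; rewrite !inE.
by case/andP => -> am; exact: leq_trans am mn.
Qed.

Lemma digits_lt_le_norm n : (digits_lt n <= digit_norm B)%N.
Proof. by apply: subset_leq_card; apply/fintype.subsetP => a; rewrite !inE => /andP[]. Qed.

Lemma digits_ltS (a : 'I_N) : B a -> digits_lt a.+1 = (digits_lt a).+1.
Proof.
move=> Ba; have := cardU1 a [pred b : 'I_N | B b && (val b < a)%N].
rewrite inE ltnn andbF add1n => <-.
apply: eq_card => b; rewrite !inE ltnS leq_eqVlt val_eqE.
by case: (b =P a) => [->|_]; rewrite ?Ba.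
Qed.

Lemma digits_lt_lt_norm (a : 'I_N) : B a -> (digits_lt a < digit_norm B)%N.
Proof. by move=> Ba; rewrite -digits_ltS ?digits_lt_le_norm. Qed.

Lemma card_digit_eq n : #|[pred a : 'I_N | B a && (val a == n)]| = is_digit n.
Proof.
case: is_digitP => [[a <- Ba]|nD].
  rewrite (@eq_card _ _ (pred1 a)) ?card1 // => b.
  by rewrite !inE val_eqE andb_idl // => /eqP ->.
apply: eq_card0 => b; rewrite !inE; apply/andP => -[Bb /eqP bn].
by apply: nD; exists b.
Qed.

Lemma exists_digit_neq v : (1 < digit_norm B)%N -> exists2 d : 'I_N, B d & (d : nat) != v.
Proof.
move=> /card_gt1P[a [b [Ba Bb ab]]]; rewrite !inE in Ba Bb.
case: (eqVneq (a : nat) v) => [av|]; last by exists a.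
by exists b => //; rewrite -av val_eqE eq_sym.
Qed.

End digit_set.

Arguments is_digitP {N B n}.

Section admissible.
Variables (R : realType) (N : nat) (B : 'I_N -> bool).

Definition admissible (y : R) := forall n, is_digit B (digit N (iter n (shift N) y)).

Lemma admissible_iter n (y : R) : admissible y -> admissible (iter n (shift N) y).
Proof. by move=> yA k; rewrite -iterD; exact: yA. Qed.

Lemma admissible_shift (y : R) : admissible y -> admissible (shift N y).
Proof. exact: (admissible_iter 1). Qed.

End admissible.

Section self_similar_function.
Variables (R : realType) (N : nat) (B : 'I_N -> bool) (G : R -> R).
Hypothesis N_gt1 : (1 < N)%N.
Let K := digit_norm B.
Hypothesis K_gt0 : (0 < K)%N.
Hypothesis G01 : forall y, 0 <= G y <= 1.
Hypothesis G_digit : forall y, irrational_in01 y ->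
  G y * K%:R = (digits_lt B (digit N y))%:R
    + (is_digit B (digit N y))%:R * G (shift N y).

Let K_gt0r : 0 < K%:R :> R. Proof. by rewrite ltr0n. Qed.

Lemma G_admissible_digit (y : R) : irrational_in01 y -> is_digit B (digit N y) ->
  G y * K%:R = (digits_lt B (digit N y))%:R + G (shift N y).
Proof. by move=> yI yD; rewrite G_digit // yD mul1r. Qed.

Lemma exists_larger_digit (y : R) : irrational_in01 y -> admissible B y ->
  exists n, exists2 e : 'I_N, B e & (digit N (iter n (shift N) y) < e)%N.
Proof.
move=> yI yA; have [n dn] := nonconstant_digits N_gt1 yI.
case: (ltngtP (digit N (iter n (shift N) y)) (digit N y)) dn => // lt _.
  by have /= /is_digitP[a a0 Ba] := yA 0%N; exists n, a; rewrite // a0.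
by have /is_digitP[b bn Bb] := yA n; exists 0%N, b; rewrite // bn.
Qed.

Lemma G_lt1 (y : R) : irrational_in01 y -> admissible B y -> G y < 1.
Proof.
move=> yI yA; have [n [e Be]] := exists_larger_digit yI yA.
elim: n y yI yA => [|n IH] y yI yA de; have /= /is_digitP[a a0 Ba] := yA 0%N;
  rewrite -(ltr_pM2r K_gt0r) mul1r G_admissible_digit -?a0 ?is_digitE //.
- have /andP[_ G1] := G01 (shift N y).
  have : ((digits_lt B a).+1 < K)%N.
    rewrite -digits_ltS //; apply: leq_ltn_trans (digits_lt_lt_norm Be).
    by apply: leq_digits_lt; rewrite a0.
  by rewrite -(ltr_nat R) -natr1 => ?; lra.
- have := IH _ (shift_in01 N_gt1 yI) (admissible_shift yA).
  rewrite -iterSr => /(_ de) G1.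
  by have := digits_lt_lt_norm Ba; rewrite -(ler_nat R) -natr1 => ?; lra.
Qed.

Lemma G_lt_scaled n (y z : R) : irrational_in01 y -> irrational_in01 z ->
  admissible B y -> admissible B z -> y < z -> 1 < (N ^ n)%:R * (z - y) -> G y < G z.
Proof.
elim: n y z => [|n IH] y z yI zI yA zA yz.
  by case: yI zI => _ /andP[y0 y1] [_ /andP[z0 z1]]; rewrite mul1r; lra.
move=> gap; have /andP[ylo _] := mul_digit_itv N_gt1 yI.
have /andP[_ zhi] := mul_digit_itv N_gt1 zI.
have Nyz : N%:R * y < N%:R * z by rewrite ltr_pM2l // N_gt0.
have : (digit N y <= digit N z)%N.
  by rewrite -ltnS -(ltr_nat R); apply: lt_trans ylo (lt_trans Nyz zhi).
rewrite -(ltr_pM2r K_gt0r) !G_admissible_digit ?(yA 0%N) ?(zA 0%N) //.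
case: ltngtP => // [lt|eq] _.
  have /is_digitP[a a0 Ba] := yA 0%N; rewrite /= -a0 in lt *.
  have := leq_digits_lt B lt; rewrite digits_ltS // -(ler_nat R) -natr1.
  have := G_lt1 (shift_in01 N_gt1 yI) (admissible_shift yA).
  by have /andP[Gz0 _] := G01 (shift N z); lra.
rewrite eq ltrD2l; apply: IH (shift_in01 N_gt1 yI) (shift_in01 N_gt1 zI)
  (admissible_shift yA) (admissible_shift zA) _ _.
  by rewrite /shift eq ltrD2r.
by rewrite /shift eq opprB addrA subrK -mulrBr mulrA -natrM -expnSr.
Qed.

Lemma G_lt (y z : R) : irrational_in01 y -> irrational_in01 z ->
  admissible B y -> admissible B z -> y < z -> G y < G z.
Proof.
move=> yI zI yA zA yz; rewrite -subr_gt0 in yz.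
by have [n gap] := expN_mul_gt1 N_gt1 yz; apply: G_lt_scaled gap; rewrite // -subr_gt0.
Qed.

Lemma G_inj (y z : R) : irrational_in01 y -> irrational_in01 z ->
  admissible B y -> admissible B z -> G y = G z -> y = z.
Proof.
move=> yI zI yA zA Gyz; case: (ltgtP y z) => // yz.
  by have := G_lt yI zI yA zA yz; rewrite Gyz ltxx.
by have := G_lt zI yI zA yA yz; rewrite Gyz ltxx.
Qed.

Lemma G_iter_int (x : R) s (a : int) : irrational_in01 x -> admissible B x ->
  G x * s%:R = a%:~R -> forall n, exists z : int, G (iter n (shift N) x) * s%:R = z%:~R.
Proof.
move=> xI xA Gx; elim=> [|n [z Gz]]; first by exists a.
set y := iter n (shift N) x; exists (z * K%:Z - (s * digits_lt B (digit N y))%:Z).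
have := G_admissible_digit (iter_shift_in01 N_gt1 n xI) (xA n).
rewrite iterS -/y => GE.
rewrite -[G (shift N y)](addKr (digits_lt B (digit N y))%:R) -GE.
by rewrite intrB intrM -!pmulrn -Gz natrM; ring.
Qed.

Lemma admissible_G_irrational (x : R) : irrational_in01 x -> admissible B x ->
  irrational (G x).
Proof.
move=> xI xA /rational_mul_int[s s_gt0 [a Gx]].
pose h n := Num.trunc (G (iter n (shift N) x) * s%:R).
have hE n : (h n)%:R = G (iter n (shift N) x) * s%:R /\ (h n <= s)%N.
  have [z Gz] := G_iter_int xI xA Gx n.
  have /andP[G0 G1] := G01 (iter n (shift N) x).
  have : (0 <= z)%R by rewrite -(ler0z R) -Gz mulr_ge0.
  case: z Gz => // k; rewrite -pmulrn => Gk _.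
  by rewrite /h Gk natrK -(ler_nat R) -Gk ler_piMl.
have [i [j [ij hij]]] := bounded_nat_seq_repeats (fun n => (hE n).2).
have Gij : G (iter i (shift N) x) = G (iter j (shift N) x).
  apply: (mulIf (_ : s%:R != 0)); first by rewrite pnatr_eq0 -lt0n.
  by rewrite -(hE i).1 -(hE j).1 hij.
have xij := G_inj (iter_shift_in01 N_gt1 i xI) (iter_shift_in01 N_gt1 j xI)
  (admissible_iter i xA) (admissible_iter j xA) Gij.
have [+ _] := iter_shift_in01 N_gt1 i xI; apply.
apply: (periodic_shift_rational N_gt1 (k := (j - i)%N)); first by rewrite subn_gt0.
by rewrite -iterD subnK ?xij // ltnW.
Qed.

Lemma nonadmissible_G_rational n (x : R) : irrational_in01 x ->
  ~~ is_digit B (digit N (iter n (shift N) x)) -> rational (G x).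
Proof.
elim: n x => [|n IH] x xI xD; rewrite -[G x](mulfK (lt0r_neq0 K_gt0r)) G_digit // addrC.
  by rewrite (negbTE xD) mul0r add0r; exact: rational_ratio.
apply/rational_affine/rationalM; first exact: rational_nat.
by apply: IH (shift_in01 N_gt1 xI) _; rewrite -iterSr.
Qed.

Lemma admissibleE (x : R) : irrational_in01 x -> admissible B x <-> irrational (G x).
Proof.
move=> xI; split; first exact: admissible_G_irrational.
move=> GxI n; apply: contrapT => /negP xD; apply: GxI.
exact: nonadmissible_G_rational xI xD.
Qed.

End self_similar_function.

Section cantor_set.
Variables (R : realType) (N : nat) (B : 'I_N -> bool) (C : set R).
Hypothesis N_gt1 : (1 < N)%N.
Hypothesis C_cantor : is_cantor_set B C.

Let N_gt0 : 0 < N%:R :> R := N_gt0 R N_gt1.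

Lemma cantor_setP (c : R) :
  C c <-> exists2 d : 'I_N, B d & exists2 c', C c' & c = cantor_map d c'.
Proof.
case: C_cantor => _ _ CE; rewrite {1}CE; split.
  by case=> d /= Bd [c' Cc' <-]; exists d => //; exists c'.
by case=> d Bd [c' Cc' ->]; exists d => //; exists c'.
Qed.

Lemma cantor_set_le1 (c : R) : C c -> c <= 1.
Proof.
case: C_cantor => C0 Ccpt _; have Csup := compact_has_sup C0 Ccpt.
have M_gt0 : 0 < N.-1%:R :> R by rewrite ltr0n -ltnS prednK // ltnW.
have NE : N%:R = N.-1%:R + 1 :> R by rewrite natr1 prednK // ltnW.
suff : sup C <= (sup C + N.-1%:R) / N%:R.
  rewrite ler_pdivlMr // NE => sup_le Cc; apply: le_trans (sup_upper_bound Csup Cc) _.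
  by nra.
apply: ge_sup C0 _ => _ /cantor_setP[d Bd [c' Cc' ->]].
rewrite /cantor_map ler_pM2r ?invr_gt0 // lerD ?(sup_upper_bound Csup) //.
by rewrite ler_nat -ltnS prednK // ltnW.
Qed.

Lemma cantor_set_ge0 (c : R) : C c -> 0 <= c.
Proof.
case: C_cantor => C0 Ccpt _.
have Clb : has_lbound C.
  have [M [_ MC]] := compact_bounded Ccpt.
  exists (- (M + 1)) => y /MC My; rewrite lerNl (le_trans _ (My _ _)) ?ltrDl //.
  by rewrite -normrN ler_norm.
suff : inf C / N%:R <= inf C.
  rewrite ler_pdivrMr // => inf_le Cc; apply: le_trans _ (ge_inf Clb Cc).
  have : 1 < N%:R :> R by rewrite ltr1n.
  by nra.
apply: lb_le_inf C0 _ => _ /cantor_setP[d Bd [c' Cc' ->]].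
rewrite /cantor_map ler_pM2r ?invr_gt0 // -[inf C]addr0 lerD ?(ge_inf Clb) //.
Qed.

Lemma cantor_set_shift (y : R) : irrational_in01 y -> C y ->
  is_digit B (digit N y) /\ C (shift N y).
Proof.
move=> yI /cantor_setP[d Bd [c Cc yE]].
have Ny : N%:R * y = c + (d : nat)%:R by rewrite yE mulrC divfK ?gt_eqF.
have c_lt1 : c < 1.
  rewrite lt_neqAle cantor_set_le1 // andbT; apply/eqP => c1; case: yI => + _; apply.
  by rewrite yE /cantor_map c1; apply: rational_affine; exact: rational_nat 1.
have dy : digit N y = d.
  rewrite /digit Ny; apply: truncn_def; rewrite -natr1.
  by have c0 := cantor_set_ge0 Cc; apply/andP; split; lra.
by rewrite /shift dy is_digitE Ny addrK.
Qed.

Lemma cantor_set_approx n (y : R) : irrational_in01 y -> admissible B y ->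
  exists2 c, C c & (N ^ n)%:R * `|y - c| <= 1.
Proof.
elim: n y => [|n IH] y yI yA.
  case: C_cantor => -[c Cc] _ _; exists c => //; rewrite mul1r.
  have := cantor_set_ge0 Cc; have := cantor_set_le1 Cc; case: yI => _ /andP[y0 y1].
  by rewrite ler_norml => *; apply/andP; split; lra.
have [c Cc shift_c] := IH _ (shift_in01 N_gt1 yI) (admissible_shift yA).
have /is_digitP[a a0 Ba] := yA 0%N.
exists (cantor_map a c); first by apply/cantor_setP; exists a => //; exists c.
have -> : y - cantor_map a c = (shift N y - c) / N%:R.
  by rewrite /shift /cantor_map a0 /=; field; rewrite gt_eqF.
by rewrite normrM normfV normr_nat expnSr natrM -mulrA [N%:R * _]mulrC divfK ?gt_eqF.
Qed.

Lemma cantor_set_admissible (y : R) : irrational_in01 y -> admissible B y -> C y.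
Proof.
move=> yI yA; have Cclosed : closed C.
  by case: C_cantor => _ Ccpt _; apply: compact_closed.
apply: Cclosed => U /nbhs_ballP[e /= e_gt0 eU].
have [n gap] := expN_mul_gt1 N_gt1 e_gt0; have [c Cc yc] := cantor_set_approx n yI yA.
exists c; split => //; apply: eU.
rewrite /ball /= -(ltr_pM2l (_ : 0 < (N ^ n)%:R :> R)) ?ltr0n ?expn_gt0 ?(ltnW N_gt1) //.
by apply: le_lt_trans gap.
Qed.

Lemma cantor_setE (y : R) : irrational_in01 y -> C y <-> admissible B y.
Proof.
move=> yI; split; last exact: cantor_set_admissible.
move=> Cy n; elim: n y yI Cy => [|n IH] y yI Cy; first exact: (cantor_set_shift yI Cy).1.
rewrite iterSr; apply: IH (shift_in01 N_gt1 yI) (cantor_set_shift yI Cy).2.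
Qed.

End cantor_set.

Section cantor_measure.
Variables (R : realType) (N : nat) (B : 'I_N -> bool) (mu : probability R R).
Hypothesis N_gt1 : (1 < N)%N.
Hypothesis K_gt1 : (1 < digit_norm B)%N.
Hypothesis mu_cantor : is_cantor_measure B mu.
Let K := digit_norm B.
Let N_gt0 : 0 < N%:R :> R := N_gt0 R N_gt1.

Definition halfline_mass (x : R) : R := fine (mu `]-oo, x]%classic).

Lemma halfline_massE (x : R) : mu `]-oo, x]%classic = (halfline_mass x)%:E.
Proof. by rewrite fineK ?fin_num_measure. Qed.

Lemma halfline_mass_le : {homo halfline_mass : x y / x <= y}.
Proof.
move=> x y xy; rewrite -lee_fin -!halfline_massE le_measure ?inE //.
by apply: subitvPr; rewrite bnd_simp.
Qed.

Lemma halfline_mass01 (x : R) : 0 <= halfline_mass x <= 1.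
Proof. by rewrite -!lee_fin -halfline_massE measure_ge0 probability_le1. Qed.

Lemma preimage_cantor_map_halfline (d : 'I_N) (x : R) :
  cantor_map d @^-1` `]-oo, x]%classic = `]-oo, N%:R * x - (d : nat)%:R]%classic.
Proof.
by apply/seteqP; split => z; rewrite /= !in_itv /= /cantor_map ler_pdivrMr // => ?; lra.
Qed.

Lemma halfline_mass_rec (x : R) :
  halfline_mass x * K%:R = \sum_(d < N | B d) halfline_mass (N%:R * x - (d : nat)%:R).
Proof.
have := mu_cantor (measurable_itv `]-oo, x]).
rewrite halfline_massE (eq_bigr (fun d : 'I_N => (halfline_mass (N%:R * x - d%:R))%:E)).
  rewrite sumEFin -EFinM => -[->].
  by rewrite mulrAC mulVf ?mul1r // pnatr_eq0 gtn_eqF // ltnW.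
by move=> d _; rewrite preimage_cantor_map_halfline halfline_massE.
Qed.

(* For r >= 1 every N r - d (d in D) is >= r, while the masses at these
   points average to F(r); hence all of them equal F(r), and a digit
   d0 < N - 1 has N r - d0 >= r + 1.  The case r <= 0 is symmetric. *)
Lemma halfline_mass_stepD (r : R) : 1 <= r -> halfline_mass (r + 1) = halfline_mass r.
Proof.
move=> r1; have [d0 Bd0 d0N] := exists_digit_neq N.-1 K_gt1.
have N_ge1 : 1 <= N%:R :> R by rewrite ler1n ltnW.
have d0_le : (d0 : nat)%:R <= N%:R - 2 :> R.
  rewrite lerBrDr -natrD ler_nat addn2; move: d0N (ltn_ord d0) => /eqP ? ?; lia.
have massE : forall d : 'I_N, B d ->
    halfline_mass (N%:R * r - (d : nat)%:R) = halfline_mass r.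
  apply: (@sum_ge_const_eq _ _ [pred d | B d]) => [d _|]; last first.
    by rewrite -halfline_mass_rec mulrC.
  apply: halfline_mass_le.
  have : (d : nat)%:R <= N%:R - 1 :> R by rewrite lerBrDr natr1 ler_nat.
  by nra.
apply: le_anti; apply/andP; split; last by apply: halfline_mass_le; lra.
by rewrite -(massE d0 Bd0); apply: halfline_mass_le; nra.
Qed.

Lemma halfline_mass_stepN (r : R) : r <= 0 -> halfline_mass (r - 1) = halfline_mass r.
Proof.
move=> r0; have [d1 Bd1 d1N] := exists_digit_neq 0 K_gt1.
have N_ge1 : 1 <= N%:R :> R by rewrite ler1n ltnW.
have d1_ge : 1 <= (d1 : nat)%:R :> R by rewrite ler1n lt0n.
have massE : forall d : 'I_N, B d ->
    halfline_mass (N%:R * r - (d : nat)%:R) = halfline_mass r.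
  apply: (@sum_le_const_eq _ _ [pred d | B d]) => [d _|]; last first.
    by rewrite -halfline_mass_rec mulrC.
  by apply: halfline_mass_le; have : 0 <= (d : nat)%:R :> R by []; nra.
apply: le_anti; apply/andP; split; first by apply: halfline_mass_le; lra.
by rewrite -(massE d1 Bd1); apply: halfline_mass_le; nra.
Qed.

Lemma halfline_mass_ge1 (r : R) : 1 <= r -> halfline_mass r = 1.
Proof.
move=> r1; pose F n := `]-oo, r + n%:R]%classic.
have muF : mu \o F = cst (halfline_mass r)%:E.
  apply/funext => n; rewrite /= halfline_massE; congr EFin.
  elim: n => [|n IH]; first by rewrite addr0.
  by rewrite -natr1 addrA halfline_mass_stepD // (le_trans r1) // lerDl.
have FT : \bigcup_n F n = setT.
  apply/seteqP; split => // z _; exists (Num.trunc (z - r)).+1 => //=.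
  by rewrite /F /= in_itv /= -lerBlDl ltW // truncnS_gt.
have : mu \o F @ \oo --> mu setT.
  rewrite -FT; apply: nondecreasing_cvg_mu => [n||m n mn].
  - exact: measurable_itv.
  - by apply: bigcup_measurable => n _; exact: measurable_itv.
  - apply/subsetPset => z; rewrite /F /= !in_itv /= => /le_trans; apply.
    by rewrite lerD2l ler_nat.
by rewrite muF probability_setT => /(cvg_unique (@ereal_hausdorff _) (cvg_cst _)) [].
Qed.

Lemma halfline_mass_le0 (r : R) : r <= 0 -> halfline_mass r = 0.
Proof.
move=> r0; pose F n := `]-oo, r - n%:R]%classic.
have muF : mu \o F = cst (halfline_mass r)%:E.
  apply/funext => n; rewrite /= halfline_massE; congr EFin.
  elim: n => [|n IH]; first by rewrite subr0.
  by rewrite -natr1 opprD addrA halfline_mass_stepN // (le_trans _ r0) // gerBl.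
have F0 : \bigcap_n F n = set0.
  apply/seteqP; split => // z /(_ (Num.trunc (r - z)).+1 I).
  rewrite /F /= in_itv /= lerBrDr -lerBrDl => /(lt_le_trans (truncnS_gt _)).
  by rewrite ltxx.
have : mu \o F @ \oo --> mu set0.
  rewrite -F0; apply: nonincreasing_cvg_mu => [|n||m n mn].
  - by rewrite (le_lt_trans (probability_le1 _ (measurable_itv _))) ?ltry.
  - exact: measurable_itv.
  - by apply: bigcap_measurable => [|n _]; [exists 0%N|exact: measurable_itv].
  - apply/subsetPset => z; rewrite /F /= !in_itv /= => /le_trans; apply.
    by rewrite lerD2l lerN2 ler_nat.
by rewrite muF measure0 => /(cvg_unique (@ereal_hausdorff _) (cvg_cst _)) [].
Qed.

Lemma halfline_mass_digit (y : R) : irrational_in01 y ->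
  halfline_mass y * K%:R = (digits_lt B (digit N y))%:R
    + (is_digit B (digit N y))%:R * halfline_mass (shift N y).
Proof.
move=> yI; have /andP[lo hi] := mul_digit_itv N_gt1 yI; set a := digit N y in lo hi *.
have sum_indicator (P : pred 'I_N) :
    \sum_(d < N | B d) (P d)%:R = #|[pred d | B d && P d]|%:R :> R.
  rewrite (eq_bigr (fun d => if P d then 1 else 0)) => [|d _]; last by case: (P d).
  by rewrite -big_mkcondr sumr_const.
rewrite halfline_mass_rec (eq_bigr (fun d : 'I_N =>
  ((d : nat) < a)%N%:R + ((d : nat) == a)%:R * halfline_mass (shift N y))) => [|d _].
  by rewrite big_split /= -mulr_suml !sum_indicator card_digit_eq.
case: ltngtP => [da|ad|->]; rewrite ?mul0r ?addr0 ?mul1r ?add0r //.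
- apply: halfline_mass_ge1; move: da; rewrite -(ler_nat R) -natr1 => da; lra.
- apply: halfline_mass_le0; move: ad; rewrite -(ler_nat R) -natr1 => ad; lra.
Qed.

Lemma cantor_cdfE (x : R) : 0 <= x -> cantor_cdf mu x = halfline_mass x.
Proof.
move=> x0; have splitE : `]-oo, x]%classic = `[0, x]%classic `|` `]-oo, 0[%classic.
  apply/seteqP; split => z; rewrite /= !in_itv /=.
    by move=> zx; case: (leP 0 z) => z0; [left; rewrite zx|right].
  by case=> [/andP[_ //]|/ltW/le_trans]; apply.
rewrite /cantor_cdf /halfline_mass splitE measureU //; last first.
  apply/seteqP; split => z //; rewrite /= !in_itv /= => -[/andP[z0 _]].
  by move/(le_lt_trans z0); rewrite ltxx.
rewrite [X in (_ + X)%E](_ : _ = 0%E) ?adde0 //.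
have mass0 : mu `]-oo, 0]%classic = 0%E by rewrite halfline_massE halfline_mass_le0.
apply/le_anti; rewrite measure_ge0 andbT -mass0 le_measure ?inE //.
by apply: subitvPr; rewrite bnd_simp.
Qed.

End cantor_measure.

Theorem lemma2p7 (R : realType) (N : nat) (B : 'I_N -> bool)
  (C : set R) (mu : probability R R) :
  valid_digits B ->
  is_cantor_set B C ->
  is_cantor_measure B mu ->
  forall x : R, 0 <= x <= 1 -> irrational x ->
  (C x <-> irrational (cantor_cdf mu x)).
Proof.
move=> [N_ge3 [K_gt1 _]] C_cantor mu_cantor x x01 xQ.
have N_gt1 : (1 < N)%N by apply: leq_trans N_ge3.
have xI := irrational_in01_itv x01 xQ; have /andP[x_ge0 _] := x01.
rewrite (cantor_cdfE N_gt1 K_gt1 mu_cantor x_ge0) (cantor_setE N_gt1 C_cantor xI).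
apply: admissibleE xI => //; first exact: ltnW.
- exact: halfline_mass01.
- exact: halfline_mass_digit.
Qed.
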